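(* For every admissible Betti function $b:\operatorname{int}\mathbb{M}\to\mathbb{N}_0$, the direct sum $\bigoplus_{v\in\operatorname{int}\mathbb{M}}B_v^{b(v)}:\mathbb{M}^{\circ}\to\mathrm{Vect}_{\mathbb{F}}$ lies in $\mathcal{J}$; in particular it is pointwise finite-dimensional and coincides with the product $\prod_{v}B_v^{b(v)}$.
   Context: Fix a field $\mathbb{F}$. Equip $\mathbb{R}^2$ with the partial order $(x,y)\preceq(x',y')$ iff $x'\le x$ and $y\le y'$. Fix reals $a<b$, let $l_0=\{x+y=a\}$, $l_1=\{x+y=b\}$, $\mathbb{M}=\{(x,y): a\le x+y\le b\}$, $\partial\mathbb{M}=l_0\cup l_1$, $\operatorname{int}\mathbb{M}=\mathbb{M}\setminus\partial\mathbb{M}$, and $T:\mathbb{M}\to\mathbb{M}$, $T(x,y)=(a-y,b-x)$. For $u\in\mathbb{M}$, ${\uparrow}u=\{v:u\preceq v\}$, ${\downarrow}u=\{v:v\preceq u\}$; $\operatorname{int}$ of a subset is its interior in $\mathbb{M}$. Functors $\mathbb{M}^{\circ}\to\mathrm{Vect}_{\mathbb{F}}$ are contravariant in $\preceq$. For $v\in\operatorname{int}\mathbb{M}$, $B_v$ is the functor with $B_v(u)=\mathbb{F}$ if $u\in({\downarrow}v)\cap\operatorname{int}({\uparrow}T^{-1}(v))$ and $0$ otherwise, internal maps identity when domain and codomain are $\mathbb{F}$ and zero otherwise. A functor $G$ vanishing on $\partial\mathbb{M}$ is cohomological if for every axis-aligned rectangle in $\mathbb{M}$ with one corner on $l_1$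 and remaining corners $u\preceq v\preceq w$, applying $G$ to the chain $\cdots\preceq T^{-1}(v)\preceq T^{-1}(w)\preceq u\preceq v\preceq w\preceq T(u)\preceq T(v)\preceq\cdots$ gives an exact sequence. $G$ is sequentially continuous if $G(u)\to\varprojlim_kG(u_k)$ is an isomorphism for every $\preceq$-increasing sequence $u_k\to u$. $\mathcal{J}$ is the full subcategory of pointwise finite-dimensional, cohomological, sequentially continuous functors with support contained in some ${\downarrow}w$. A function $b:\operatorname{int}\mathbb{M}\to\mathbb{N}_0$ is an admissible Betti function if its support is contained in ${\downarrow}w$ for some $w\in\mathbb{M}$ and $\sum_{v\in({\uparrow}u)\cap\operatorname{int}({\downarrow}T(u))}b(v)<\infty$ for every $u\in\operatorname{int}\mathbb{M}$. *)

From HB Require Import structures.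
From mathcomp Require Import all_boot all_order all_algebra.
From mathcomp Require Import all_classical all_reals.
From mathcomp Require Import topology normedtype sequences esum.

Set Implicit Arguments.
Unset Strict Implicit.
Unset Printing Implicit Defensive.

Import Order.TTheory GRing.Theory Num.Theory.
Import numFieldNormedType.Exports.
Local Open Scope classical_set_scope.
Local Open Scope ring_scope.

Section Geometry.
Variable R : realType.
Variables a b : R.

Definition pt := (R * R)%type.

Definition ple (p q : pt) : Prop := q.1 <= p.1 /\ p.2 <= q.2.

Definition inM (p : pt) : Prop := a <= p.1 + p.2 <= b.
Definition bdM (p : pt) : Prop := p.1 + p.2 = a \/ p.1 + p.2 = b.
Definition intM (p : pt) : Prop := a < p.1 + p.2 < b.

Definition Tm (p : pt) : pt := (a - p.2, b - p.1).
Definition Tinv (p : pt) : pt := (b - p.2, a - p.1).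

Definition Tpow (k : int) (p : pt) : pt :=
  match k with
  | Posz n => iter n Tm p
  | Negz n => iter n.+1 Tinv p
  end.

Definition upset (u : pt) : set pt := [set v | inM v /\ ple u v].
Definition downset (u : pt) : set pt := [set v | inM v /\ ple v u].

(* interior of A (a subset of M) relative to M (topology of R^2 restricted
   to M; the max-metric induces the usual topology of R^2) *)
Definition relintM (A : set pt) : set pt :=
  [set q | A q /\ exists2 e : R, 0 < e &
     forall r, inM r -> `|r.1 - q.1| < e -> `|r.2 - q.2| < e -> A r].

Definition Bsupp (v : pt) : set pt := downset v `&` relintM (upset (Tinv v)).

(* the chain ... T^-1 v <= T^-1 w <= u <= v <= w <= T u <= T v <= ...,
   indexed by the integers, position 0 being u *)
Definition chainpt (u v w : pt) (n : int) : pt :=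
  let r := (n %% 3)%Z in
  Tpow (n %/ 3)%Z (if r == 0 then u else if r == 1 then v else w).

End Geometry.

(* Functors M^op -> Vect_F (contravariant in ⪯)                          *)

Record pmod (F : fieldType) (R : realType) := PMod {
  pobj : pt R -> lmodType F;
  pmor : forall u v : pt R, pobj v -> pobj u
}.
Arguments pobj {F R}.
Arguments pmor {F R}.

Section FunctorProps.
Variables (F : fieldType) (R : realType) (a b : R).
Implicit Types G : pmod F R.

Definition lin_map (V W : lmodType F) (f : V -> W) : Prop :=
  forall (k : F) (x y : V), f (k *: x + y) = k *: f x + f y.

Definition is_functor G : Prop :=
  (forall u v, inM a b u -> inM a b v -> ple u v -> lin_map (pmor G u v)) /\
  (forall u, inM a b u -> forall x, pmor G u u x = x) /\
  (forall u v w, inM a b u -> inM a b v -> inM a b w -> ple u v -> ple v w ->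
     forall x, pmor G u w x = pmor G u v (pmor G v w x)).

Definition trivial_space (V : lmodType F) : Prop := forall x : V, x = 0.

Definition findim (V : lmodType F) : Prop :=
  exists n (e : 'I_n -> V), forall x, exists c : 'I_n -> F,
    x = \sum_(i < n) c i *: e i.

Definition pfd G : Prop := forall u, inM a b u -> findim (pobj G u).

Definition vanishes_on G (A : set (pt R)) : Prop :=
  forall u, A u -> trivial_space (pobj G u).

Definition exact_at G (c : int -> pt R) (n : int) : Prop :=
  forall y : pobj G (c n),
    pmor G (c (n - 1)) (c n) y = 0 <-> exists x, pmor G (c n) (c (n + 1)) x = y.

(* axis-aligned rectangle [x1,x2] x [y1,y2] in M with corner (x2,y2) on l1;
   remaining corners u = (x2,y1) ⪯ v = (x1,y1) ⪯ w = (x1,y2) *)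
Definition cohomological G : Prop :=
  vanishes_on G (bdM a b) /\
  forall x1 x2 y1 y2 : R, x1 < x2 -> y1 < y2 ->
    a <= x1 + y1 -> x2 + y2 = b ->
    forall n, exact_at G (chainpt a b (x2, y1) (x1, y1) (x1, y2)) n.

Definition seq_continuous G : Prop :=
  forall (s : nat -> pt R) (u : pt R),
    inM a b u -> (forall k, inM a b (s k)) -> (forall k, ple (s k) (s k.+1)) ->
    ((fun k => (s k).1) @ \oo --> u.1) -> ((fun k => (s k).2) @ \oo --> u.2) ->
    (* G(u) -> lim_k G(s k) is an isomorphism (it is linear by functoriality) *)
    (forall x : pobj G u, (forall k, pmor G (s k) u x = 0) -> x = 0) /\
    (forall y : forall k, pobj G (s k),
       (forall k, pmor G (s k) (s k.+1) (y k.+1) = y k) ->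
       exists x : pobj G u, forall k, pmor G (s k) u x = y k).

Definition bounded_support G : Prop :=
  exists w, inM a b w /\
    forall u, inM a b u -> ~ ple u w -> trivial_space (pobj G u).

Definition inJ G : Prop :=
  [/\ is_functor G, pfd G, cohomological G, seq_continuous G & bounded_support G].

End FunctorProps.

Definition admissible (R : realType) (a b : R) (bet : pt R -> nat) : Prop :=
  (exists w, inM a b w /\ forall v, intM a b v -> bet v <> 0%N -> ple v w) /\
  (forall u, intM a b u ->
     (\esum_(v in [set v | intM a b v /\ upset a b u v /\
                          relintM a b (downset a b (Tm a b u)) v])
        ((bet v)%:R : R)%:E < +oo)%E).

(* An element at u is a family indexed by pairs (v,i), i < b(v), with     *)
(* v in int M and u in supp B_v; direct sum = finitely supported.         *)
Section DirectSum.
Variables (F : fieldType) (R : realType) (a b : R) (bet : pt R -> nat).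

Definition Bidx (u : pt R) (p : pt R * nat) : Prop :=
  intM a b p.1 /\ (p.2 < bet p.1)%N /\ Bsupp a b p.1 u.

Definition prod_pred (u : pt R) : {pred (pt R * nat -> F^o)} :=
  fun f => `[< forall p, f p != 0 -> Bidx u p >].

Definition sum_pred (u : pt R) : {pred (pt R * nat -> F^o)} :=
  fun f => `[< finite_set [set p | f p != 0] >] && (f \in prod_pred u).

Lemma prod_pred_closed u : subsemimod_closed (prod_pred u).
Proof.
split; [split|].
- by apply/asboolP => p; rewrite (_ : (0 : pt R * nat -> F^o) p = 0) // eqxx.
- move=> f g /asboolP Hf /asboolP Hg; apply/asboolP => p.
  rewrite (_ : (f + g) p = f p + g p) //.
  have [/Hf//|/negPn/eqP f0] := boolP (f p != 0).
  by rewrite f0 add0r => /Hg.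
- move=> k f /asboolP Hf; apply/asboolP => p.
  rewrite (_ : (k *: f) p = k *: f p) //.
  have [/Hf//|/negPn/eqP f0] := boolP (f p != 0).
  by rewrite f0 scaler0 eqxx.
Qed.

Lemma sum_pred_closed u : subsemimod_closed (sum_pred u).
Proof.
have [[P0 PD] PZ] := prod_pred_closed u.
split; [split|].
- apply/andP; split; last exact: P0.
  apply/asboolP.
  rewrite (_ : [set _ | _] = set0) //; apply/seteqP; split=> p //=.
  by rewrite (_ : (0 : pt R * nat -> F^o) p = 0) // eqxx.
- move=> f g /andP[/asboolP Ff Pf] /andP[/asboolP Fg Pg].
  apply/andP; split; last exact: PD.
  apply/asboolP.
  have FU : finite_set ([set p | f p != 0] `|` [set p | g p != 0]).
    by rewrite finite_setU.
  apply: (sub_finite_set _ FU) => p /=.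
  rewrite (_ : (f + g) p = f p + g p) //.
  have [//|/negPn/eqP f0] := boolP (f p != 0); first by left.
  by rewrite f0 add0r => ?; right.
- move=> k f /andP[/asboolP Ff Pf].
  apply/andP; split; last exact: PZ.
  apply/asboolP.
  apply: (sub_finite_set _ Ff) => p /=.
  rewrite (_ : (k *: f) p = k *: f p) //.
  have [//|/negPn/eqP f0] := boolP (f p != 0).
  by rewrite f0 scaler0 eqxx.
Qed.

HB.instance Definition _ u :=
  GRing.isSubSemiModClosed.Build F (pt R * nat -> F^o) (prod_pred u)
    (prod_pred_closed u).
HB.instance Definition _ u :=
  GRing.isSubSemiModClosed.Build F (pt R * nat -> F^o) (sum_pred u)
    (sum_pred_closed u).

Record DSum (u : pt R) := MkDSum {
  dsval : pt R * nat -> F^o;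
  dsvalP : dsval \in sum_pred u }.
HB.instance Definition _ u := [isSub for @dsval u].
HB.instance Definition _ u := [Choice of DSum u by <:].
HB.instance Definition _ u := [SubChoice_isSubLmodule of DSum u by <:].

Record DProd (u : pt R) := MkDProd {
  dpval : pt R * nat -> F^o;
  dpvalP : dpval \in prod_pred u }.
HB.instance Definition _ u := [isSub for @dpval u].
HB.instance Definition _ u := [Choice of DProd u by <:].
HB.instance Definition _ u := [SubChoice_isSubLmodule of DProd u by <:].

(* internal map for u ⪯ u': on the (v,i) summand it is the identity when
   u, u' are both in supp B_v and zero otherwise *)
Definition restrict (u : pt R) (f : pt R * nat -> F^o) : pt R * nat -> F^o :=
  fun p => if `[< Bsupp a b p.1 u >] then f p else 0.

Definition dsum_mor (u u' : pt R) (f : DSum u') : DSum u :=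
  insubd (0 : DSum u) (restrict u (val f)).

Definition BettiSum : pmod F R := @PMod F R (fun u => (DSum u : lmodType F)) dsum_mor.

Definition sum_to_prod (u : pt R) (f : DSum u) : DProd u :=
  insubd (0 : DProd u) (val f).

End DirectSum.

From Pilot Require Import Defs.
From HB Require Import structures.
From mathcomp Require Import all_boot all_order all_algebra.
From mathcomp Require Import all_classical all_reals.
From mathcomp Require Import topology normedtype sequences esum.
From mathcomp Require Import finmap lra zify.

Set Implicit Arguments.
Unset Strict Implicit.
Unset Printing Implicit Defensive.

Import Order.TTheory GRing.Theory Num.Theory.
Import numFieldNormedType.Exports.
Local Open Scope classical_set_scope.
Local Open Scope ring_scope.

(* The support of [B_v] is the half-open box [v.1, b - v.2) x (a - v.1, v.2],
   which lies in int M, is order-convex, and is carried by [T] onto the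
   support of [B_(T v)].  The structure maps of the direct sum act on each
   summand as the identity or as zero, so every property required for [J]
   becomes a statement about these boxes.  Exactness along a rectangle chain
   is a three-point condition on boxes; it is invariant under [T], so it
   suffices to check it on one period of the chain.  Sequential continuity
   holds because a box contains the limit [u] of a ⪯-increasing sequence
   exactly when it contains all late terms of the sequence.  Admissibility
   leaves only finitely many summands nonzero at each point, which gives
   finite dimension and makes the sum equal to the product. *)

Section Supports.
Variables (R : realType) (a b : R).
Implicit Types (p q v : pt R).
Local Notation Bsupp := (Bsupp a b).

Lemma ple_trans p q v : ple p q -> ple q v -> ple p v.
Proof.
move=> [pq1 pq2] [qv1 qv2].
by split; [exact: le_trans qv1 pq1 | exact: le_trans pq2 qv2].
Qed.

Lemma relintM_downset v q : inM a b q -> v.1 < q.1 -> q.2 < v.2 ->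
  relintM a b (downset a b v) q.
Proof.
move=> Mq h1 h2; split; first by split => //; split; apply: ltW.
exists (Num.min (q.1 - v.1) (v.2 - q.2)); first by rewrite lt_min !subr_gt0 h1 h2.
move=> r Mr; rewrite !lt_min => /andP[r1 _] /andP[_ r2]; split => //; split.
  by move: r1; rewrite ltr_norml => /andP[+ _]; lra.
by move: r2; rewrite ltr_norml => /andP[_]; lra.
Qed.

Lemma BsuppP v q : Bsupp v q <->
  [/\ v.1 <= q.1, q.1 < b - v.2, a - v.1 < q.2 & q.2 <= v.2].
Proof.
rewrite /Bsupp /downset /relintM /upset /ple /Tinv /=; split.
- move=> [[/andP[Mq1 Mq2] [h1 h2]] [_ [e e0 He]]].
  have e2 : 0 < e / 2 by rewrite divr_gt0.
  have e2e : e / 2 < e by rewrite ltr_pdivrMr // ltr_pMr // ltr1n.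
  have [] := He (q.1 + e / 2, q.2 - e / 2).
  + by rewrite /inM /=; apply/andP; split; lra.
  + by rewrite /= addrAC subrr add0r ger0_norm // ltW.
  + by rewrite /= addrAC subrr add0r normrN ger0_norm // ltW.
  by move=> _ [/= k1 k2]; split => //; lra.
- move=> [h1 h2 h3 h4].
  have Mq : inM a b q by rewrite /inM; apply/andP; split; lra.
  split; first by split.
  split; first by split => //; split; lra.
  exists (Num.min (b - v.2 - q.1) (q.2 - (a - v.1))).
    by rewrite lt_min; apply/andP; split; lra.
  move=> r Mr; rewrite !lt_min => /andP[r1 _] /andP[_ r2]; split => //; split.
    by move: r1; rewrite ltr_norml => /andP[_]; lra.
  by move: r2; rewrite ltr_norml => /andP[+ _]; lra.
Qed.

Lemma Bsupp_int v q : Bsupp v q -> intM a b q.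
Proof. by move=> /BsuppP[*]; apply/andP; split; lra. Qed.

Lemma Bsupp_convex v q1 q2 q3 : Bsupp v q1 -> Bsupp v q3 ->
  ple q1 q2 -> ple q2 q3 -> Bsupp v q2.
Proof.
move=> /BsuppP[? ? ? ?] /BsuppP[? ? ? ?] [? ?] [? ?].
by apply/BsuppP; split; lra.
Qed.

Lemma Bsupp_Tm v q : Bsupp v (Tm a b q) <-> Bsupp (Tinv a b v) q.
Proof. by rewrite !BsuppP /=; split=> -[? ? ? ?]; split; lra. Qed.

Lemma Bsupp_Tinv v q : Bsupp v (Tinv a b q) <-> Bsupp (Tm a b v) q.
Proof. by rewrite !BsuppP /=; split=> -[? ? ? ?]; split; lra. Qed.

Lemma Bsupp_Tpow k v : exists v', forall q, Bsupp v (Tpow a b k q) <-> Bsupp v' q.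
Proof.
have iter_transport (f g : pt R -> pt R) :
    (forall v q, Bsupp v (f q) <-> Bsupp (g v) q) ->
    forall n v, exists v', forall q, Bsupp v (iter n f q) <-> Bsupp v' q.
  move=> fg; elim=> [|n IH] w; first by exists w.
  by have [w' Hw'] := IH w; exists (g w') => q; rewrite iterSr Hw' fg.
case: k => n; first exact: (iter_transport _ _ Bsupp_Tm n).
exact: (iter_transport _ _ Bsupp_Tinv n.+1).
Qed.

Lemma Tpow_addr1 k q : Tpow a b (k + 1) q = Tpow a b k (Tm a b q).
Proof.
have TmK x : Tinv a b (Tm a b x) = x by case: x => x y; congr (_, _) => /=; lra.
case: k => [n|[|n]].
- rewrite (_ : _ + 1 = Posz n.+1); last by lia.
  by rewrite /= -iterSr.
- rewrite (_ : _ + 1 = Posz 0); last by lia.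
  by rewrite /= TmK.
- rewrite (_ : _ + 1 = Negz n); last by lia.
  by rewrite /Tpow [in RHS]iterSr TmK.
Qed.

(* Exactness of [B_v q3 -> B_v q2 -> B_v q1] at [B_v q2], for the indicator
   functor [B_v] and [q1 ⪯ q2 ⪯ q3]. *)
Definition Bsupp_exact v q1 q2 q3 : Prop :=
  ~ (Bsupp v q1 /\ Bsupp v q2 /\ Bsupp v q3) /\
  (Bsupp v q2 -> ~ Bsupp v q1 -> Bsupp v q3).

Lemma Bsupp_exact_Tpow k q1 q2 q3 : (forall v, Bsupp_exact v q1 q2 q3) ->
  forall v, Bsupp_exact v (Tpow a b k q1) (Tpow a b k q2) (Tpow a b k q3).
Proof.
move=> ex v; have [v' Hv'] := Bsupp_Tpow k v.
by rewrite /Bsupp_exact !Hv'; exact: ex.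
Qed.

Lemma rect_Bsupp_exact (x1 x2 y1 y2 : R) v : x1 < x2 -> y1 < y2 ->
  a <= x1 + y1 -> x2 + y2 = b ->
  [/\ Bsupp_exact v (x2, y1) (x1, y1) (x1, y2),
      Bsupp_exact v (x1, y1) (x1, y2) (Tm a b (x2, y1)) &
      Bsupp_exact v (x1, y2) (Tm a b (x2, y1)) (Tm a b (x1, y1))].
Proof.
move=> ? ? ? /eqP; rewrite eq_le => /andP[? ?].
have Bsupp_out q : ~ Bsupp v q ->
    [\/ q.1 < v.1, b - v.2 <= q.1, q.2 <= a - v.1 | v.2 < q.2].
  move=> nB; case: (ltP q.1 v.1) => [|h1]; first by constructor 1.
  case: (leP (b - v.2) q.1) => [|h2]; first by constructor 2.
  case: (leP q.2 (a - v.1)) => [|h3]; first by constructor 3.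
  case: (ltP v.2 q.2) => [|h4]; first by constructor 4.
  by case: nB; apply/BsuppP.
by split; split=> [|/BsuppP[? ? ? ?] /Bsupp_out[?|?|?|?]]; rewrite ?BsuppP;
  try (move=> [[? ? ? ?] [[? ? ? ?] [? ? ? ?]]]); simpl in *; try split; lra.
Qed.

Lemma chainpt_mod3 u v w k (r : nat) : (r < 3)%N ->
  chainpt a b u v w (k * 3 + r%:Z) =
  Tpow a b k (if r == 0%N then u else if r == 1%N then v else w).
Proof.
move=> r3; rewrite /chainpt divzMDl // modzMDl.
by case: r r3 => [|[|[|]]] //= _; rewrite addr0.
Qed.

Lemma chainpt_Bsupp_exact (x1 x2 y1 y2 : R) v : x1 < x2 -> y1 < y2 ->
  a <= x1 + y1 -> x2 + y2 = b -> forall n,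
  let c := chainpt a b (x2, y1) (x1, y1) (x1, y2) in
  Bsupp_exact v (c (n - 1)) (c n) (c (n + 1)).
Proof.
move=> h12 hy ha hb n c.
have base w := @rect_Bsupp_exact x1 x2 y1 y2 w h12 hy ha hb.
have [k [r [r3 ->]]] : exists k (r : nat), (r < 3)%N /\ n = k * 3 + r%:Z.
  exists (n %/ 3)%Z, `|(n %% 3)%Z|%N; split; first by lia.
  by rewrite {1}(divz_eq n 3) gez0_abs // modz_ge0.
case: r r3 => [|[|[|r]]] // _; rewrite /c.
- have [j ->] : exists j, k = j + 1 by exists (k - 1); lia.
  rewrite (_ : (j + 1) * 3 + _ - 1 = j * 3 + 2%N%:Z); last by lia.
  rewrite (_ : (j + 1) * 3 + _ + 1 = (j + 1) * 3 + 1%N%:Z); last by lia.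
  rewrite !chainpt_mod3 //= !Tpow_addr1.
  by apply: Bsupp_exact_Tpow => w; case: (base w).
- rewrite (_ : k * 3 + _ - 1 = k * 3 + 0%N%:Z); last by lia.
  rewrite (_ : k * 3 + _ + 1 = k * 3 + 2%N%:Z); last by lia.
  rewrite !chainpt_mod3 //=.
  by apply: Bsupp_exact_Tpow => w; case: (base w).
- rewrite (_ : k * 3 + _ - 1 = k * 3 + 1%N%:Z); last by lia.
  rewrite (_ : k * 3 + _ + 1 = (k + 1) * 3 + 0%N%:Z); last by lia.
  rewrite !chainpt_mod3 //= !Tpow_addr1.
  by apply: Bsupp_exact_Tpow => w; case: (base w).
Qed.

End Supports.

Section IncreasingSequence.
Variables (R : realType) (a b : R) (s : nat -> pt R) (u : pt R).
Hypothesis s_ple : forall k, ple (s k) (s k.+1).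
Hypothesis s1_cvg : (fun k => (s k).1) @ \oo --> u.1.
Hypothesis s2_cvg : (fun k => (s k).2) @ \oo --> u.2.

Lemma ple_seq k m : (k <= m)%N -> ple (s k) (s m).
Proof.
move=> /subnKC <-; elim: (m - k)%N => [|d IH]; first by rewrite addn0.
by rewrite addnS; exact: ple_trans IH (s_ple _).
Qed.

Lemma ple_seq_lim k : ple (s k) u.
Proof.
split; [apply: (cvgr_to_le s1_cvg) | apply: (cvgr_to_ge s2_cvg)];
  by exists k => // m /= /ple_seq[].
Qed.

Lemma Bsupp_seq_near v : Bsupp a b v u -> \forall k \near \oo, Bsupp a b v (s k).
Proof.
move=> /BsuppP[h1 h2 h3 h4]; near=> k; have [lk1 lk2] := ple_seq_lim k.
apply/BsuppP; split; [exact: le_trans h1 lk1 | | | exact: le_trans lk2 h4].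
- by near: k; exact: cvgr_lt s1_cvg _ h2.
- by near: k; exact: cvgr_gt s2_cvg _ h3.
Unshelve. all: by end_near.
Qed.

Lemma Bsupp_seq_lim v : (\forall k \near \oo, Bsupp a b v (s k)) -> Bsupp a b v u.
Proof.
move=> near_supp; have [k _ /(_ k (leqnn k))/BsuppP[_ hk2 hk3 _]] := near_supp.
have [lk1 lk2] := ple_seq_lim k.
apply/BsuppP; split; [|exact: le_lt_trans lk1 hk2|exact: lt_le_trans hk3 lk2|].
- by apply: (cvgr_to_ge s1_cvg); apply: filterS near_supp => m /BsuppP[].
- by apply: (cvgr_to_le s2_cvg); apply: filterS near_supp => m /BsuppP[].
Qed.

End IncreasingSequence.

Lemma esum_nat_lty_finite (R : realType) (T : choiceType) (D : set T)
    (g : T -> nat) :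
  (\esum_(v in D) ((g v)%:R : R)%:E < +oo)%E ->
  finite_set (D `&` [set v | g v != 0%N]).
Proof.
move=> lty; apply: contrapT => infin.
have ge_n (n : nat) : ((n%:R : R)%:E <= \esum_(v in D) ((g v)%:R : R)%:E)%E.
  have [B BD Bn] := infinite_set_fset n infin.
  apply: esum_ge; exists [set` B].
    by split; [exact: finite_fset | move=> x /BD[]].
  rewrite -fsbig_seq //= sumEFin lee_fin -natr_sum ler_nat.
  apply: (leq_trans Bn); rewrite -sum1_size.
  rewrite big_seq_cond; rewrite [X in (_ <= X)%N]big_seq_cond.
  by apply: leq_sum => i /andP[/BD[_ /=]]; rewrite lt0n.
have ge0 : (0 <= \esum_(v in D) ((g v)%:R : R)%:E)%E.
  by apply: esum_ge0 => v _; rewrite lee_fin.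
move: lty ge0 ge_n.
case: (\esum_(v in D) _) => [r| |] // _ _ /(_ (Num.truncn r).+1).
by rewrite lee_fin leNgt truncnS_gt.
Qed.

Section BettiSum.
Variables (F : fieldType) (R : realType) (a b : R) (bet : pt R -> nat).
Local Notation DS := (DSum F a b bet).
Local Notation Bsupp := (Bsupp a b).
Local Notation Bidx := (Bidx a b bet).
Implicit Types (u : pt R) (p : pt R * nat).

Lemma sum_predP u (g : pt R * nat -> F^o) :
  reflect (finite_set [set p | g p != 0] /\ forall p, g p != 0 -> Bidx u p)
          (g \in sum_pred a b bet u).
Proof.
apply: (iffP andP) => [[/asboolP fin]|[fin supp]].
  by rewrite unfold_in => /asboolP.
by split; [exact/asboolP | rewrite unfold_in; exact/asboolP].
Qed.

Lemma dsum_ext u (x y : DS u) : (forall p, val x p = val y p) -> x = y.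
Proof. by move=> xy; apply/val_inj/funext. Qed.

Lemma dsum_eq0 u (x : DS u) : (forall p, val x p = 0) -> x = 0.
Proof. by move=> x0; apply: dsum_ext => p; rewrite x0 raddf0. Qed.

Lemma dsum_fin {u} (f : DS u) : finite_set [set p | val f p != 0].
Proof. by case: f => f /= /sum_predP[]. Qed.

Lemma dsum_supp {u} (f : DS u) p : val f p != 0 -> Bidx u p.
Proof. by case: f => f /= /sum_predP[_]; apply. Qed.

Lemma dsum_out {u} (f : DS u) p : ~ Bsupp p.1 u -> val f p = 0.
Proof. by move=> nB; apply: contra_notP nB => /eqP/dsum_supp[_ []]. Qed.

Lemma restrict_sum_pred u u' (f : DS u') :
  Defs.restrict a b u (val f) \in sum_pred a b bet u.
Proof.
apply/sum_predP; split.
  apply: (sub_finite_set _ (dsum_fin f)) => q /=.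
  by rewrite /Defs.restrict; case: asboolP; rewrite ?eqxx.
move=> q; rewrite /Defs.restrict; case: asboolP => [Bq /dsum_supp[? [? _]] //|_].
by rewrite eqxx.
Qed.

Lemma dsum_morE u u' (f : DS u') p :
  val (dsum_mor u f) p = if `[< Bsupp p.1 u >] then val f p else 0.
Proof. by rewrite /dsum_mor insubdK ?restrict_sum_pred. Qed.

Lemma dsum_mor_in {u u'} (f : DS u') p :
  Bsupp p.1 u -> val (dsum_mor u f) p = val f p.
Proof. by move=> Bp; rewrite dsum_morE; case: asboolP. Qed.

Lemma BettiSum_functor : is_functor a b (BettiSum F a b bet).
Proof.
split; [|split].
- move=> u v _ _ _ k x y; apply: dsum_ext => p /=; rewrite !fctE !dsum_morE.
  by case: asboolP; rewrite ?scaler0 ?addr0.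
- move=> u _ x; apply: dsum_ext => p /=; rewrite dsum_morE.
  by case: asboolP => // /dsum_out ->.
- move=> u v w _ _ _ uv vw x; apply: dsum_ext => p /=; rewrite !dsum_morE.
  case: asboolP => // Bu; case: asboolP => // nBv.
  by apply: dsum_out => Bw; apply/nBv/(Bsupp_convex Bu Bw uv vw).
Qed.

Lemma dsum_exact q1 q2 q3 : (forall v, Bsupp_exact a b v q1 q2 q3) ->
  forall y : DS q2, dsum_mor q1 y = 0 <-> exists x : DS q3, dsum_mor q2 x = y.
Proof.
move=> ex y; split=> [y0|[x <-]].
- have yP : val y \in sum_pred a b bet q3.
    apply/sum_predP; split; first exact: dsum_fin.
    move=> p yp; have [Ip [bp B2]] := dsum_supp yp; split=> //; split=> //.
    apply: (proj2 (ex p.1)) => // B1; move: yp.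
    by rewrite -(dsum_mor_in y B1) y0 eqxx.
  exists (MkDSum yP); apply: dsum_ext => p /=; rewrite dsum_morE.
  by case: asboolP => // /dsum_out ->.
- apply: dsum_eq0 => p; rewrite !dsum_morE.
  case: asboolP => // B1; case: asboolP => // B2.
  by apply: dsum_out => B3; apply: (proj1 (ex p.1)).
Qed.

Lemma BettiSum_cohomological : cohomological a b (BettiSum F a b bet).
Proof.
split=> [u bdu x|x1 x2 y1 y2 h12 hy ha hb n].
  apply: dsum_eq0 => p; apply: dsum_out => /Bsupp_int /andP[].
  by case: bdu => ->; rewrite ltxx ?andbF.
by apply: dsum_exact => v; exact: chainpt_Bsupp_exact.
Qed.

Lemma finite_Bidx : admissible a b bet -> forall u, finite_set (Bidx u).
Proof.
move=> [_ adm] u; have [Iu|nIu] := pselect (intM a b u); last first.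
  by apply: (sub_finite_set _ (finite_set0 _)) => p [_ [_ /Bsupp_int]].
apply: (sub_finite_set _ (finite_setXR (esum_nat_lty_finite (adm u Iu))
                                         (fun v _ => finite_II (bet v)))).
move=> [v i] [/= Iv [ib /[dup] Bu /BsuppP[h1 h2 h3 h4]]].
have Mv : inM a b v by move: Iv => /andP[? ?]; apply/andP; split; apply: ltW.
split=> //; split; last by rewrite -lt0n (leq_ltn_trans _ ib).
split=> //; split; first by split=> //; split.
by apply: relintM_downset => //=; lra.
Qed.

Lemma findim_DSum u : finite_set (Bidx u) -> findim (DS u).
Proof.
move=> /finite_seqP[s0 s0E]; set s := undup s0.
pose delta q : pt R * nat -> F^o := fun p => if p == q then 1 else 0.
have deltaP q : q \in s -> delta q \in sum_pred a b bet u.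
  rewrite mem_undup => qs; apply/sum_predP; split=> [|p]; rewrite /delta.
    apply: (sub_finite_set _ (finite_set1 q)) => p /=.
    by case: ifP => [/eqP|]; rewrite ?eqxx.
  by case: ifP => [/eqP -> _|]; rewrite ?s0E ?eqxx.
pose q0 : pt R * nat := ((0, 0), 0%N).
exists (size s), (fun i => insubd 0 (delta (nth q0 s i))) => x.
exists (fun i => val x (nth q0 s i)); apply: dsum_ext => p.
rewrite raddf_sum fct_sumE.
under eq_bigr => i _ do rewrite /= scalrfctE /= insubdK ?deltaP ?mem_nth //.
rewrite -(big_mkord xpredT (fun i => val x (nth q0 s i) * delta (nth q0 s i) p)).
rewrite -(big_nth q0 xpredT (fun q => val x q * delta q p)).
have [ps|nps] := boolP (p \in s).
  rewrite (bigD1_seq p) ?undup_uniq //= big1 /delta ?eqxx ?mulr1 ?addr0 //.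
  by move=> q /negbTE qp; rewrite eq_sym qp mulr0.
rewrite big1_seq => [|q /andP[_ qs]]; last first.
  by rewrite /delta; case: eqP => [pq|_]; [rewrite pq qs in nps | rewrite mulr0].
apply/eqP; apply: contraNT nps => /dsum_supp Bp.
by move: Bp; rewrite s0E mem_undup.
Qed.

Lemma BettiSum_bounded_support :
  admissible a b bet -> bounded_support a b (BettiSum F a b bet).
Proof.
move=> [[w [Mw bet_w]] _]; exists w; split=> // u Mu nuw x.
apply: dsum_eq0 => p; apply/eqP; apply: contraT => /dsum_supp[Ip [bp Bp]].
have [wp1 wp2] : ple p.1 w by apply: bet_w Ip _ => b0; rewrite b0 in bp.
have /BsuppP[p1 _ _ p2] := Bp.
by case: nuw; split; [exact: le_trans p1 | exact: le_trans wp2].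
Qed.

Lemma sum_to_prod_bij u : finite_set (Bidx u) ->
  bijective (@sum_to_prod F R a b bet u).
Proof.
move=> finB.
have sumP (h : DProd F a b bet u) : val h \in sum_pred a b bet u.
  have hP p : val h p != 0 -> Bidx u p.
    by case: h => h /=; rewrite unfold_in => /asboolP; apply.
  by apply/sum_predP; split=> //; exact: (sub_finite_set _ finB).
have prodP (f : DS u) : val f \in prod_pred a b bet u by case: f => f /= /andP[].
exists (fun h => MkDSum (sumP h)) => [f|h]; apply: val_inj => /=.
  by rewrite /sum_to_prod insubdK.
by rewrite /sum_to_prod insubdK // (valP h).
Qed.

End BettiSum.

Section SequentialContinuity.
Variables (F : fieldType) (R : realType) (a b : R) (bet : pt R -> nat).
Local Notation DS := (DSum F a b bet).
Local Notation Bsupp := (Bsupp a b).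
Local Notation Bidx := (Bidx a b bet).
Implicit Types (p : pt R * nat).

Variables (s : nat -> pt R) (u : pt R).
Hypothesis s_ple : forall k, ple (s k) (s k.+1).
Hypothesis s1_cvg : (fun k => (s k).1) @ \oo --> u.1.
Hypothesis s2_cvg : (fun k => (s k).2) @ \oo --> u.2.

Lemma dsum_lim_inj (x : DS u) : (forall k, dsum_mor (s k) x = 0) -> x = 0.
Proof.
move=> x0; apply: dsum_eq0 => p; apply/eqP.
apply: contraT => /[dup] xp /dsum_supp[_ [_ Bu]].
have [k _ /(_ k (leqnn k)) Bk] := Bsupp_seq_near s_ple s1_cvg s2_cvg Bu.
by move: xp; rewrite -(dsum_mor_in x Bk) x0 raddf0 eqxx.
Qed.

Variable y : forall k, DS (s k).
Hypothesis y_compat : forall k, dsum_mor (s k) (y k.+1) = y k.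

Lemma compat_stable k d p :
  Bsupp p.1 (s k) -> val (y (k + d)%N) p = val (y k) p.
Proof.
move=> Bk; elim: d => [|d IH]; first by rewrite addn0.
rewrite addnS -IH; have [Bkd|nBkd] := pselect (Bsupp p.1 (s (k + d)%N)).
  by rewrite -[in RHS]y_compat dsum_mor_in.
rewrite (dsum_out _ nBkd); apply: dsum_out => Bkd1; apply: nBkd.
exact: Bsupp_convex Bk Bkd1 (ple_seq s_ple (leq_addr d k)) (s_ple _).
Qed.

(* The limit takes at [p] the common value of [y k] over the [k] with [s k] in
   the support of [B_(p.1)]; if there is no such [k], [xget] falls back on [0]
   and [y 0] vanishes at [p]. *)
Definition compat_lim p : F^o := val (y (xget 0%N [set k | Bsupp p.1 (s k)])) p.

Lemma compat_limE k p : Bsupp p.1 (s k) -> compat_lim p = val (y k) p.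
Proof.
move=> Bk; rewrite /compat_lim; set j := xget _ _.
have Bj : Bsupp p.1 (s j).
  by apply: (@xgetPex _ 0%N [set k | Bsupp p.1 (s k)]); exists k.
rewrite -(compat_stable (maxn j k - j) Bj) -(compat_stable (maxn j k - k) Bk).
by rewrite !subnKC ?leq_maxl ?leq_maxr.
Qed.

Lemma compat_lim_supp p : compat_lim p != 0 -> Bidx u p.
Proof.
rewrite /compat_lim; set j := xget _ _ => /[dup] yj /dsum_supp[Ip [bp Bj]].
split=> //; split=> //; apply: (Bsupp_seq_lim s_ple s1_cvg s2_cvg).
exists j => // k /= /subnKC <-.
have : val (y (j + (k - j))%N) p != 0 by rewrite compat_stable.
by case/dsum_supp=> _ [].
Qed.

Lemma dsum_lim_surj : finite_set (Bidx u) ->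
  exists x : DS u, forall k, dsum_mor (s k) x = y k.
Proof.
move=> finB; have limP : compat_lim \in sum_pred a b bet u.
  apply/sum_predP; split; last exact: compat_lim_supp.
  exact: sub_finite_set compat_lim_supp finB.
exists (MkDSum limP) => k; apply: dsum_ext => p; rewrite dsum_morE /=.
by case: asboolP => [/compat_limE|/dsum_out ->].
Qed.

End SequentialContinuity.

Lemma BettiSum_seq_continuous (F : fieldType) (R : realType) (a b : R) bet :
  (forall u, finite_set (Bidx a b bet u)) ->
  seq_continuous a b (BettiSum F a b bet).
Proof.
move=> finB s u _ _ s_ple s1_cvg s2_cvg.
split; first exact: dsum_lim_inj.
by move=> y y_compat; exact: dsum_lim_surj y_compat (finB u).
Qed.

Theorem lemma4p8 (F : fieldType) (R : realType) (a b : R)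
    (bet : pt R -> nat) :
  a < b -> admissible a b bet ->
  inJ a b (BettiSum F a b bet) /\
  (forall u : pt R, inM a b u -> bijective (@sum_to_prod F R a b bet u)).
Proof.
move=> _ adm; have finB := finite_Bidx adm.
split=> [|u _]; last exact: sum_to_prod_bij.
split.
- exact: BettiSum_functor.
- by move=> u _; exact: findim_DSum.
- exact: BettiSum_cohomological.
- exact: BettiSum_seq_continuous.
- exact: BettiSum_bounded_support.
Qed.
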